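(* For every $n\ge2$, $\operatorname{diam}(\mathcal{C}_3(K_{1,n-1}))=\lfloor 3n/2\rfloor$.
   Context: $K_{1,n-1}$ is the star with one center and $n-1$ leaves. A proper 3-coloring of a tree $T=(V,E)$ is a map $f\colon V\to\mathbb{Z}/3\mathbb{Z}$ with $f(u)\neq f(v)$ for every edge $uv\in E$. The 3-coloring graph $\mathcal{C}_3(T)$ has the proper 3-colorings as vertices, two colorings adjacent iff they differ at exactly one vertex; $\operatorname{diam}$ denotes graph diameter. *)

From mathcomp Require Import all_boot.
Set Implicit Arguments. Unset Strict Implicit. Unset Printing Implicit Defensive.

Section GraphDist.
Variable T : finType.
Variable e : rel T.

Definition reach (k : nat) (x y : T) : bool :=
  [exists p : k.-tuple T, path e x p && (last x p == y)].

(* length of a shortest walk from x to y; shortest walks have length < #|T|,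
   and #|T| is returned as a sentinel if y is unreachable from x. *)
Definition gdist (x y : T) : nat := find (fun k => reach k x y) (iota 0 #|T|).

Definition gdiam (V : {pred T}) : nat := \max_(x in V) \max_(y in V) gdist x y.
End GraphDist.

Definition star_edge (n : nat) (u v : 'I_n) : bool :=
  (u != v) && ((val u == 0) || (val v == 0)).

(* 3-colorings: maps to Z/3Z, represented by 'I_3. *)
Definition coloring (n : nat) := {ffun 'I_n -> 'I_3}.

Definition proper3 (n : nat) (f : coloring n) : bool :=
  [forall u : 'I_n, forall v : 'I_n, star_edge u v ==> (f u != f v)].

Definition col_adj (n : nat) : rel (coloring n) := fun f g =>
  [&& proper3 f, proper3 g & #|[set x | f x != g x]| == 1].

Definition diam_C3_star (n : nat) : nat :=
  gdiam (@col_adj n) (fun f => proper3 f).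

From mathcomp Require Import all_boot zify.

Set Implicit Arguments.
Unset Strict Implicit.
Unset Printing Implicit Defensive.

(* Upper bound: if the two centers agree, recolor the differing leaves one at
   a time.  If the centers are a != b and c is the third color, there are two
   walks: recolor the leaves of f to c, move the center to b, then fix the
   leaves of g; or recolor the leaves of f to b, move the center to c, swap all
   leaves to a, move the center to b, then fix the leaves of g.  Each leaf of f
   is recolored in exactly one of the two first phases and each leaf of g in
   exactly one of the two last ones, so the two lengths add up to at most
   3(n-1) + 3 = 3n, and the shorter one has length at most floor(3n/2).

   Lower bound: a potential that changes by at most one along every edge of the
   coloring graph vanishes at the coloring with center 0 and all leaves 1 and
   is at least floor(3n/2) at the coloring with center 1 whose leaves are split
   as evenly as possible between the colors 0 and 2. *)

Section Reach.
Variables (T : finType) (e : rel T).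

Lemma reach0 x : reach e 0 x x.
Proof. by apply/existsP; exists [tuple]; rewrite /= eqxx. Qed.

Lemma reach_cons k x y z : e x y -> reach e k y z -> reach e k.+1 x z.
Proof.
move=> exy /existsP [p /andP [pp lp]]; apply/existsP; exists [tuple of y :: p].
by rewrite /= exy pp.
Qed.

Lemma reach_cat j k x y z : reach e j x y -> reach e k y z -> reach e (j + k) x z.
Proof.
move=> /existsP [p /andP [pp /eqP lp]] /existsP [q /andP [pq lq]].
apply/existsP; exists [tuple of p ++ q].
by rewrite /= cat_path last_cat pp lp pq.
Qed.

Lemma gdist_le k x y : k < #|T| -> reach e k x y -> gdist e x y <= k.
Proof.
move=> hk hr; rewrite leqNgt; apply/negP => /(before_find 0).
by rewrite nth_iota // hr.
Qed.

Lemma reach_gdist k x y : k < #|T| -> reach e k x y -> reach e (gdist e x y) x y.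
Proof.
move=> hk hr; have hx : has (fun k => reach e k x y) (iota 0 #|T|).
  by apply/hasP; exists k => //; rewrite mem_iota.
have := nth_find 0 hx; rewrite -/(gdist e x y) nth_iota //.
by move: hx; rewrite has_find size_iota.
Qed.

Variable phi : T -> nat.
Hypothesis phi_adj : forall x y, e x y -> phi y <= (phi x).+1.

Lemma reach_phi k x y : reach e k x y -> phi y <= phi x + k.
Proof.
move=> /existsP [p /andP [pp /eqP <-]].
case: p pp => /= s /eqP <-; elim: s x => [|a s IH] x /=; first by rewrite addn0.
by move=> /andP [hxa hp]; have := IH a hp; have := phi_adj hxa; lia.
Qed.

Lemma gdiam_ge_phi (V : {pred T}) k x y : x \in V -> y \in V ->
  k < #|T| -> reach e k x y -> phi y <= phi x + gdiam e V.
Proof.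
move=> xV yV hk hr; apply: leq_trans (reach_phi (reach_gdist hk hr)) _.
rewrite leq_add2l; apply: leq_trans (leq_bigmax_cond x xV).
exact: (leq_bigmax_cond y yV).
Qed.

End Reach.

Lemma gdiam_le (T : finType) (e : rel T) (V : {pred T}) d : d < #|T| ->
  (forall x y, x \in V -> y \in V -> exists2 k, k <= d & reach e k x y) ->
  gdiam e V <= d.
Proof.
move=> hd hV; apply/bigmax_leqP => x xV; apply/bigmax_leqP => y yV.
have [k kd hk] := hV x y xV yV.
exact: leq_trans (gdist_le (leq_ltn_trans kd hd) hk) kd.
Qed.

Definition third (a b : 'I_3) : 'I_3 := inord (3 - a - b).

Lemma thirdC a b : third a b = third b a.
Proof. by rewrite /third subnAC. Qed.

Lemma third_spec (a b : 'I_3) : a != b ->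
  [/\ third a b != a, third a b != b &
      forall x, x != a -> (x == third a b) = (x != b)].
Proof.
case: a => [[|[|[|?]]] ?]; case: b => [[|[|[|?]]] ?] => //= _; rewrite /third.
all: split; rewrite -?val_eqE /= ?inordK //.
all: by case => [[|[|[|?]]] ?]; rewrite -?val_eqE /= ?inordK.
Qed.

Section Star.
Variable N : nat.
Notation coloring := (coloring N.+1).

Definition disagree (h1 h2 : coloring) := [set v | h1 v != h2 v].

Definition leaf_count (h : coloring) (k : nat) :=
  #|[set v : 'I_N.+1 | (v != ord0) && (h v == k :> nat)]|.

Definition star_col (z w : 'I_3) : coloring :=
  [ffun u => if u == ord0 then z else w].

(* [pot z k0 k2] bounds from below the distance from [star_col 0 1] to a
   coloring with center [z] and [k0], [k2] leaves colored 0, 2.  The two terms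
   for [z = 1] are the two ways of moving the center to 1: from center 0 with
   all leaves 2, or from center 2 with all leaves 0. *)
Definition pot (z : 'I_3) (k0 k2 : nat) :=
  if z == 0 :> nat then k2
  else if z == 1 :> nat then minn (N.+1 + k0) (N.+2 + k2)
  else k0.+1.

Definition potential (h : coloring) := pot (h ord0) (leaf_count h 0) (leaf_count h 2).

Lemma proper3P (h : coloring) :
  reflect (forall u, u != ord0 -> h u != h ord0) (proper3 h).
Proof.
apply: (iffP forallP) => [hp u nu | hp u].
  by have /forallP /(_ ord0) /implyP := hp u; apply; rewrite /star_edge nu orbT.
apply/forallP => v; apply/implyP; rewrite /star_edge => /andP [uv /orP [u0|v0]].
  have u_0 : u = ord0 by apply: val_inj; exact/eqP.
  by rewrite u_0 eq_sym hp // -u_0 eq_sym.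
have v_0 : v = ord0 by apply: val_inj; exact/eqP.
by rewrite v_0 hp // -v_0.
Qed.

Lemma card_leaves : #|[set~ (ord0 : 'I_N.+1)]| = N.
Proof. by rewrite cardsC1 card_ord. Qed.

Lemma card_leaves_split (P : pred 'I_N.+1) :
  #|[set v | (v != ord0) && P v]| + #|[set v | (v != ord0) && ~~ P v]| = N.
Proof.
rewrite -[RHS]card_leaves -(cardsID [set v | P v] [set~ ord0]).
by congr (_ + _); apply: eq_card => v; rewrite !inE // andbC.
Qed.

Lemma card_disagree_le (h1 h2 : coloring) : h1 ord0 = h2 ord0 -> #|disagree h1 h2| <= N.
Proof.
move=> e0; rewrite -[leqRHS]card_leaves; apply/subset_leq_card/subsetP => u.
by rewrite !inE; apply: contra => /eqP ->; rewrite e0.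
Qed.

Lemma disagreeC (h1 h2 : coloring) : disagree h1 h2 = disagree h2 h1.
Proof. by apply/setP => u; rewrite !inE eq_sym. Qed.

Lemma disagree_star_col (h : coloring) a w : h ord0 = a ->
  disagree h (star_col a w) = [set v | (v != ord0) && (h v != w)].
Proof.
move=> e0; apply/setP => u; rewrite !inE ffunE.
by case: (eqVneq u ord0) => [->|]; rewrite ?e0 ?eqxx.
Qed.

Lemma star_col0 z w : star_col z w ord0 = z.
Proof. by rewrite ffunE eqxx. Qed.

Lemma proper_star_col z w : z != w -> proper3 (star_col z w).
Proof. by move=> zw; apply/proper3P => u nu; rewrite !ffunE (negbTE nu) eqxx eq_sym. Qed.

Lemma adj_star_col z z' w : z != w -> z' != w -> z != z' ->
  col_adj (star_col z w) (star_col z' w).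
Proof.
move=> zw z'w zz'; rewrite /col_adj !proper_star_col //=.
apply/cards1P; exists ord0; apply/setP => u; rewrite !inE !ffunE.
by case: (eqVneq u ord0) => _; rewrite ?zz' ?eqxx.
Qed.

Lemma leaf_count_adj (h h' : coloring) k :
  #|disagree h h'| = 1 -> leaf_count h' k <= (leaf_count h k).+1.
Proof.
move=> /eqP/cards1P [v hv]; rewrite /leaf_count.
set S := [set u | (u != ord0) && (h u == k :> nat)].
apply: leq_trans (_ : #|v |: S| <= _); last by rewrite cardsU1; case: (v \in S).
apply/subset_leq_card/subsetP => u; rewrite !inE.
case: (eqVneq u v) => //= nuv; have : u \notin disagree h h' by rewrite hv inE.
by rewrite inE negbK => /eqP ->.
Qed.

Lemma leaf_count_const (h : coloring) c k : (forall u, u != ord0 -> h u = c) ->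
  leaf_count h k = if c == k :> nat then N else 0.
Proof.
move=> hc; case: ifP => ck.
  rewrite -[RHS]card_leaves; apply: eq_card => u; rewrite !inE.
  by case: (eqVneq u ord0) => //= nu; rewrite hc.
apply/eqP; rewrite cards_eq0; apply/eqP/setP => u; rewrite !inE.
by case: (eqVneq u ord0) => //= nu; rewrite hc ?ck.
Qed.

Lemma recenter_leaves (h h' : coloring) : col_adj h h' -> h ord0 != h' ord0 ->
  forall u, u != ord0 -> h u = third (h ord0) (h' ord0) /\ h' u = h u.
Proof.
case/and3P => ph ph' /cards1P [v hv] moved u nu.
have v0 : v = ord0 by move/setP: hv => /(_ ord0); rewrite !inE moved => /esym/eqP.
subst v.
have hu' : h' u = h u.
  by move/setP: hv => /(_ u); rewrite !inE (negbTE nu) => /negbFE/eqP.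
have [_ _ key] := third_spec moved; split=> //; apply/eqP.
by rewrite key; [rewrite -hu'; apply/proper3P | apply/proper3P].
Qed.

Lemma pot_recenter (a b : 'I_3) : a != b ->
  let k i := if third a b == i :> nat then N else 0 in
  pot b (k 0) (k 2) <= (pot a (k 0) (k 2)).+1.
Proof.
by case: a => [[|[|[|?]]] ?]; case: b => [[|[|[|?]]] ?] => //= _;
  rewrite /pot /third /= ?inordK //=; lia.
Qed.

Lemma potential_adj (h h' : coloring) : col_adj h h' -> potential h' <= (potential h).+1.
Proof.
move=> adj; case: (eqVneq (h ord0) (h' ord0)) => [same|moved].
  case/and3P: adj => _ _ /eqP d1; rewrite /potential /pot -same.
  have := leaf_count_adj 0 d1; have := leaf_count_adj 2 d1.
  by case: ifP => _; [|case: ifP => _]; lia.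
have leaves := recenter_leaves adj moved.
have ch u : u != ord0 -> h u = third (h ord0) (h' ord0) by case/leaves.
have ch' u : u != ord0 -> h' u = third (h ord0) (h' ord0).
  by move=> nu; have [<- ->] := leaves u nu.
rewrite /potential !(leaf_count_const _ ch) !(leaf_count_const _ ch').
exact: pot_recenter.
Qed.

Lemma reach_same_center (h1 h2 : coloring) : proper3 h1 -> proper3 h2 ->
  h1 ord0 = h2 ord0 -> reach (@col_adj N.+1) #|disagree h1 h2| h1 h2.
Proof.
move=> p1 p2 e0; move Ek: #|disagree h1 h2| => k.
elim: k h1 p1 e0 Ek => [|k IH] h1 p1 e0 dk.
  suff -> : h1 = h2 by exact: reach0.
  apply/ffunP => u; move/eqP: dk; rewrite cards_eq0 => /eqP/setP/(_ u).
  by rewrite !inE => /negbFE/eqP.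
have [v vdis] : exists v, v \in disagree h1 h2 by apply/card_gt0P; rewrite dk.
have nv : v != ord0 by apply: contraTneq vdis => ->; rewrite inE e0 negbK.
pose h := [ffun u => if u == v then h2 v else h1 u].
have h0 : h ord0 = h2 ord0 by rewrite ffunE eq_sym (negbTE nv).
have ph : proper3 h.
  apply/proper3P => u nu; rewrite h0 ffunE; case: (eqVneq u v) => [<-|_].
    exact/proper3P.
  by rewrite -e0; apply/proper3P.
have dh : #|disagree h h2| = k.
  move: dk; rewrite (cardsD1 v) vdis add1n => -[<-]; apply: eq_card => u.
  by rewrite !inE ffunE; case: (eqVneq u v) => [->|]; rewrite ?eqxx.
apply: reach_cons (IH h ph h0 dh).
rewrite /col_adj p1 ph; apply/cards1P; exists v; apply/setP => u.
rewrite !inE ffunE; case: (eqVneq u v) => [->|]; rewrite ?eqxx //.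
by move: vdis; rewrite inE.
Qed.

Lemma card_disagree_split (h : coloring) (a b : 'I_3) : proper3 h -> h ord0 = a ->
  a != b -> #|disagree h (star_col a (third a b))| + #|disagree h (star_col a b)| = N.
Proof.
move=> ph e0 ab; have [_ _ key] := third_spec ab.
rewrite !disagree_star_col // -[RHS](card_leaves_split (fun v => h v != third a b)).
congr (_ + _); apply: eq_card => v; rewrite !inE negbK.
by case: (eqVneq v ord0) => //= nv; rewrite key // -e0; apply/proper3P.
Qed.

(* The two walks of [reach_short] have total length at most [3 * N.+1]. *)
Lemma shorter_route d1 d2 d3 d4 d5 : d1 + d2 = N -> d3 + d4 = N -> d5 <= N ->
  (d1 + d3.+1 <= (3 * N.+1)./2) || (d2 + (d5.+1 + d4.+1) <= (3 * N.+1)./2).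
Proof. by rewrite -divn2 => *; apply/orP; lia. Qed.

Lemma reach_short (f g : coloring) : proper3 f -> proper3 g ->
  exists2 k, k <= (3 * N.+1)./2 & reach (@col_adj N.+1) k f g.
Proof.
move=> pf pg; case: (eqVneq (f ord0) (g ord0)) => [same|ab].
  exists #|disagree f g|; last exact: reach_same_center.
  by have := card_disagree_le same; rewrite -divn2; lia.
set a := f ord0 in ab *; set b := g ord0 in ab *; set c := third a b.
have ba : b != a by rewrite eq_sym.
have [ca cb _] := third_spec ab; rewrite -/c in ca cb.
have ac : a != c by rewrite eq_sym.
have bc : b != c by rewrite eq_sym.
have r1 := reach_same_center pf (proper_star_col ac) (esym (star_col0 a c)).
have r2 := reach_same_center (proper_star_col bc) pg (star_col0 b c).
have r3 := reach_same_center pf (proper_star_col ab) (esym (star_col0 a b)).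
have e4 : star_col c b ord0 = star_col c a ord0 by rewrite !star_col0.
have r4 := reach_same_center (proper_star_col cb) (proper_star_col ca) e4.
have r5 := reach_same_center (proper_star_col ba) pg (star_col0 b a).
have walk1 := reach_cat r1 (reach_cons (adj_star_col ac bc ab) r2).
have walk2 := reach_cat r3 (reach_cons (adj_star_col ab cb ac)
                 (reach_cat r4 (reach_cons (adj_star_col ca ba cb) r5))).
have sf := card_disagree_split pf erefl ab.
have sg := card_disagree_split pg erefl ba; rewrite -thirdC -/c in sg.
rewrite disagreeC [disagree g _]disagreeC in sg.
have l4 := card_disagree_le e4.
set d1 := #|disagree f (star_col a c)| in sf walk1 *.
set d2 := #|disagree f (star_col a b)| in sf walk2 *.
set d3 := #|disagree (star_col b c) g| in sg walk1 *.
set d4 := #|disagree (star_col b a) g| in sg walk2 *.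
set d5 := #|disagree (star_col c b) (star_col c a)| in l4 walk2 *.
have [short|short] := orP (shorter_route sf sg l4).
  by exists (d1 + d3.+1).
by exists (d2 + (d5.+1 + d4.+1)).
Qed.

Lemma diam_bound_lt_card : (3 * N.+1)./2 < #|coloring|.
Proof.
rewrite card_ffun !card_ord; have := ltn_expl N (isT : 1 < 3).
by rewrite expnS -divn2; lia.
Qed.

Definition far_col : coloring :=
  [ffun u => if u == ord0 then inord 1 else if u <= (N.+1)./2 then ord0 else inord 2].

Lemma proper_far_col : proper3 far_col.
Proof.
apply/proper3P => u nu; rewrite !ffunE (negbTE nu) eqxx.
by case: ifP; rewrite -val_eqE /= !inordK.
Qed.

Lemma card_leaves_upto y : y <= N ->
  #|[set v : 'I_N.+1 | (v != ord0) && (v <= y)]| = y.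
Proof.
move=> yN; have y1N : y.+1 <= N.+1 by [].
pose S := [set widen_ord y1N i | i in 'I_y.+1].
have memS u : (u \in S) = (u <= y).
  apply/imsetP/idP => [[i _ ->] /=|hu]; first by rewrite -ltnS.
  by exists (Ordinal (hu : u < y.+1)) => //; apply: val_inj.
have : #|S| = y.+1.
  by rewrite card_imset ?card_ord // => i j /(congr1 val) /= /val_inj.
rewrite (cardsD1 ord0) memS add1n => -[hS]; rewrite -[RHS]hS; apply: eq_card => u.
by rewrite !inE memS.
Qed.

Lemma potential_far_col : (3 * N.+1)./2 <= potential far_col.
Proof.
have far0 : far_col ord0 = inord 1 by rewrite ffunE eqxx.
have leaves v : v != ord0 -> (far_col v == 0 :> nat) = (v <= (N.+1)./2).
  by move=> nv; rewrite ffunE (negbTE nv); case: ifP; rewrite //= inordK.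
have k0 : leaf_count far_col 0 = (N.+1)./2.
  have yN : (N.+1)./2 <= N by rewrite -divn2; lia.
  rewrite -[RHS](card_leaves_upto yN).
  by apply: eq_card => v; rewrite !inE; case: (eqVneq v ord0) => //= /leaves.
have k02 : leaf_count far_col 0 + leaf_count far_col 2 = N.
  rewrite -(card_leaves_split (fun v => far_col v == 0 :> nat)).
  congr (_ + _); apply: eq_card => v; rewrite !inE.
  case: (eqVneq v ord0) => //= nv; rewrite ffunE (negbTE nv).
  by case: ifP; rewrite //= inordK.
rewrite -divn2 /potential /pot far0 inordK //=.
by move: k02; rewrite k0 -divn2; lia.
Qed.

Lemma potential_star_col01 : potential (star_col ord0 (inord 1)) = 0.
Proof.
have leaves u : u != ord0 -> star_col ord0 (inord 1) u = inord 1.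
  by move=> nu; rewrite ffunE (negbTE nu).
by rewrite /potential star_col0 !(leaf_count_const _ leaves) inordK.
Qed.

End Star.

Theorem mainTheorem17 (n : nat) : 2 <= n -> diam_C3_star n = (3 * n)./2.
Proof.
case: n => [//|N] _; apply/eqP; rewrite eqn_leq; apply/andP; split.
  apply: gdiam_le => [|f g pf pg]; first exact: diam_bound_lt_card.
  exact: reach_short.
have p01 : proper3 (star_col N ord0 (inord 1)).
  by apply: proper_star_col; rewrite -val_eqE /= inordK.
have [k kd hk] := reach_short p01 (proper_far_col N).
have := gdiam_ge_phi (@potential_adj N) p01 (proper_far_col N)
          (leq_ltn_trans kd (diam_bound_lt_card N)) hk.
by rewrite potential_star_col01 add0n; apply: leq_trans (potential_far_col N).
Qed.
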